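(* Let $t \geq 1$, $W \geq 2$ and $R \geq 2$. Then there is no fast write (W1R2) implementation of a multi-writer multi-reader atomic register in the message-passing client–server model described in the context, i.e., no wait-free implementation tolerating the crash of up to $t$ of the $S$ servers in which every write operation completes after one round-trip of communication and every read operation completes after (at most) two round-trips of communication.
   Context: System model: there are three disjoint sets of processes: a set of $S \geq 2$ servers $\{s_1,\dots,s_S\}$, a set of $R$ readers $\{r_1,\dots,r_R\}$ and a set of $W$ writers $\{w_1,\dots,w_W\}$ (readers and writers are called clients). Clients and servers communicate by asynchronous message passing over bidirectional reliable channels; there is no communication between servers and no communication between clients. In any execution, any number of clients and up to $t$ of the $S$ servers may crash. An implementation is wait-free: every invoked read or write operation of a non-crashed client eventually returns regardless of the status of other clients. Only writers invoke $write(v)$ and only readers invoke $read()$, which returns a value. A round-trip of communication is one phase in which the client sends a message to all servers (to query or update them) and waits for replies; since up to $t$ servers may crash, a client can only wait for replies from $S-t$ servers. A W1R2 implementation is one in which every write uses exactly one round-trip and every read uses two round-trips. Atomicity: an execution is a sequence of invocation and response events with distinct global timestamps; $O_1 \prec_\sigma O_2$ if the response of $O_1$ occurs before the invocation of $O_2$. An execution is well-formed if each client's subsequence is sequential (each invocation immediately followed by its matching response). The register is atomic if for every well-formed execution $\sigma$ there is a sequential permutation $\pi$ of all its operations such that (i) if $O_1 \prec_\sigma O_2$ then $O_1$ appears before $O_2$ in $\pi$, and (ii) each read returns the value written by the latest preceding write in $\pi$. *)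

From mathcomp Require Import all_boot.
Set Implicit Arguments. Unset Strict Implicit. Unset Printing Implicit Defensive.

Section Model.
Variables (S R W : nat) (V : Type).

Definition client : Type := ('I_W + 'I_R)%type.

(* A write(v) is one round-trip: send w_send to every server, wait for
   replies from S-t servers, then compute the new local state (w_end).
   A read is one or two round-trips: send r_send1, wait for S-t replies,
   r_end1 either returns a value (Some v) or goes on with a second
   round-trip (r_send2 / r_end2) and then returns. *)
Record Impl : Type := {
  SState : Type; WState : Type; RState : Type; Msg : Type; Reply : Type;
  s_init : 'I_S -> SState;
  s_recv : 'I_S -> SState -> client -> Msg -> SState * Reply;
  w_init : 'I_W -> WState;
  w_send : 'I_W -> WState -> V -> 'I_S -> Msg;
  w_end  : 'I_W -> WState -> V -> ('I_S -> option Reply) -> WState;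
  r_init : 'I_R -> RState;
  r_send1 : 'I_R -> RState -> 'I_S -> Msg;
  r_end1  : 'I_R -> RState -> ('I_S -> option Reply) -> RState * option V;
  r_send2 : 'I_R -> RState -> 'I_S -> Msg;
  r_end2  : 'I_R -> RState -> ('I_S -> option Reply) -> RState * V }.
Arguments s_init : clear implicits.  Arguments s_recv : clear implicits.
Arguments w_init : clear implicits.  Arguments w_send : clear implicits.
Arguments w_end : clear implicits.   Arguments r_init : clear implicits.
Arguments r_send1 : clear implicits. Arguments r_end1 : clear implicits.
Arguments r_send2 : clear implicits. Arguments r_end2 : clear implicits.

Inductive Event : Type :=
  | InvW of 'I_W & V | RespW of 'I_W | InvR of 'I_R | RespR of 'I_R & V.

Definition evt (h : seq Event) (i : nat) : option Event := nth None (map Some h) i.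

Definition oclient (e : option Event) : option client :=
  match e with
  | Some (InvW w _) | Some (RespW w) => Some (inl w)
  | Some (InvR r) | Some (RespR r _) => Some (inr r)
  | None => None
  end.

Definition is_inv (e : option Event) : bool :=
  match e with Some (InvW _ _) | Some (InvR _) => true | _ => false end.
Definition is_resp (e : option Event) : bool :=
  match e with Some (RespW _) | Some (RespR _ _) => true | _ => false end.
Definition is_read (e : option Event) : bool :=
  match e with Some (InvR _) => true | _ => false end.

Definition resp (h : seq Event) (i j : nat) : Prop :=
  [/\ i < j, is_inv (evt h i), is_resp (evt h j),
      oclient (evt h j) = oclient (evt h i) &
      forall k, i < k < j -> oclient (evt h k) <> oclient (evt h i)].

Definition precedes (h : seq Event) (i j : nat) : Prop :=
  exists k, resp h i k /\ k < j.

Definition last_write (v0 : V) (h : seq Event) (l : seq nat) : V :=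
  foldl (fun acc k => if evt h k is Some (InvW _ v) then v else acc) v0 l.

(* Operations are identified by the index of their invocation event.
   pi is the linearization: it contains every complete operation and
   possibly some pending writes (pending reads have no effect). *)
Definition atomic (v0 : V) (h : seq Event) : Prop :=
  exists pi : seq nat,
  [/\ uniq pi,
      (forall i, i \in pi -> is_inv (evt h i)),
      (forall i j, resp h i j -> i \in pi),
      (forall i, i \in pi -> is_read (evt h i) -> exists j, resp h i j) &
      (forall i j, i \in pi -> j \in pi -> precedes h i j ->
                   index i pi < index j pi)] /\
      (forall i j r v, i \in pi -> resp h i j -> evt h j = Some (RespR r v) ->
                   v = last_write v0 h (take (index i pi) pi)).

Section Exec.
Variables (t : nat) (I : Impl).

Definition replies : Type := 'I_S -> option (Reply I).

Inductive WMode : Type := WIdle | WBusy of V & nat & replies.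
Inductive RMode : Type := RIdle | RPh1 of nat & replies | RPh2 of nat & replies.

Definition upd (A : eqType) (B : Type) (f : A -> B) (a : A) (b : B) : A -> B :=
  fun x => if x == a then b else f x.

Definition nrep (rep : replies) : nat := #|[pred s : 'I_S | isSome (rep s)]|.

Definition quorum (rep : replies) : bool := S - t <= nrep rep.

Definition no_rep : replies := fun _ => None.

Definition addrep (rep : replies) (s : 'I_S) (x : Reply I) : replies :=
  if rep s is None then
    (if nrep rep < S - t then upd rep s (Some x) else rep)
  else rep.

Definition wdeliver (m : WMode) (k : nat) (s : 'I_S) (x : Reply I) : WMode :=
  match m with
  | WBusy v k' rep => if k' == k then WBusy v k' (addrep rep s x) else m
  | _ => m end.
Definition rdeliver (m : RMode) (k : nat) (s : 'I_S) (x : Reply I) : RMode :=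
  match m with
  | RPh1 k' rep => if k' == k then RPh1 k' (addrep rep s x) else m
  | RPh2 k' rep => if k' == k then RPh2 k' (addrep rep s x) else m
  | _ => m end.

(* Global configuration: server states, client local states and modes,
   messages in transit (tagged with the round identifier), a counter
   giving fresh round identifiers, and the history of register events. *)
Record Config : Type := mkConfig {
  c_srv : 'I_S -> SState I;
  c_wst : 'I_W -> WState I; c_wmode : 'I_W -> WMode;
  c_rst : 'I_R -> RState I; c_rmode : 'I_R -> RMode;
  c_req : seq ('I_S * client * nat * Msg I);
  c_rep : seq (client * 'I_S * nat * Reply I);
  c_tick : nat;
  c_hist : seq Event }.

Definition init_config : Config :=
  mkConfig (s_init I) (w_init I) (fun _ => WIdle) (r_init I) (fun _ => RIdle)
           [::] [::] 0 [::].

Definition bcast (c : client) (k : nat) (f : 'I_S -> Msg I)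
  : seq ('I_S * client * nat * Msg I) :=
  [seq (s, c, k, f s) | s <- enum 'I_S].

Inductive step : Config -> Config -> Prop :=
  | st_inv_write C w v :
      c_wmode C w = WIdle ->
      step C (mkConfig (c_srv C) (c_wst C)
                (upd (c_wmode C) w (WBusy v (c_tick C) no_rep))
                (c_rst C) (c_rmode C)
                (c_req C ++ bcast (inl w) (c_tick C) (w_send I w (c_wst C w) v))
                (c_rep C) (c_tick C).+1 (rcons (c_hist C) (InvW w v)))
  | st_end_write C w v k rep :
      c_wmode C w = WBusy v k rep -> quorum rep ->
      step C (mkConfig (c_srv C) (upd (c_wst C) w (w_end I w (c_wst C w) v rep))
                (upd (c_wmode C) w WIdle)
                (c_rst C) (c_rmode C) (c_req C) (c_rep C) (c_tick C)
                (rcons (c_hist C) (RespW w)))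
  | st_inv_read C r :
      c_rmode C r = RIdle ->
      step C (mkConfig (c_srv C) (c_wst C) (c_wmode C)
                (c_rst C) (upd (c_rmode C) r (RPh1 (c_tick C) no_rep))
                (c_req C ++ bcast (inr r) (c_tick C) (r_send1 I r (c_rst C r)))
                (c_rep C) (c_tick C).+1 (rcons (c_hist C) (InvR r)))
  | st_end_read1_ret C r k rep st v :
      c_rmode C r = RPh1 k rep -> quorum rep ->
      r_end1 I r (c_rst C r) rep = (st, Some v) ->
      step C (mkConfig (c_srv C) (c_wst C) (c_wmode C)
                (upd (c_rst C) r st) (upd (c_rmode C) r RIdle)
                (c_req C) (c_rep C) (c_tick C) (rcons (c_hist C) (RespR r v)))
  | st_end_read1_cont C r k rep st :
      c_rmode C r = RPh1 k rep -> quorum rep ->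
      r_end1 I r (c_rst C r) rep = (st, None) ->
      step C (mkConfig (c_srv C) (c_wst C) (c_wmode C)
                (upd (c_rst C) r st) (upd (c_rmode C) r (RPh2 (c_tick C) no_rep))
                (c_req C ++ bcast (inr r) (c_tick C) (r_send2 I r st))
                (c_rep C) (c_tick C).+1 (c_hist C))
  | st_end_read2 C r k rep st v :
      c_rmode C r = RPh2 k rep -> quorum rep ->
      r_end2 I r (c_rst C r) rep = (st, v) ->
      step C (mkConfig (c_srv C) (c_wst C) (c_wmode C)
                (upd (c_rst C) r st) (upd (c_rmode C) r RIdle)
                (c_req C) (c_rep C) (c_tick C) (rcons (c_hist C) (RespR r v)))
  | st_server C l1 l2 s c k m st x :
      c_req C = l1 ++ (s, c, k, m) :: l2 ->
      s_recv I s (c_srv C s) c m = (st, x) ->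
      step C (mkConfig (upd (c_srv C) s st) (c_wst C) (c_wmode C)
                (c_rst C) (c_rmode C) (l1 ++ l2)
                (c_rep C ++ [:: (c, s, k, x)]) (c_tick C) (c_hist C))
  | st_client_w C l1 l2 w s k x :
      c_rep C = l1 ++ (inl w, s, k, x) :: l2 ->
      step C (mkConfig (c_srv C) (c_wst C)
                (upd (c_wmode C) w (wdeliver (c_wmode C w) k s x))
                (c_rst C) (c_rmode C) (c_req C) (l1 ++ l2) (c_tick C) (c_hist C))
  | st_client_r C l1 l2 r s k x :
      c_rep C = l1 ++ (inr r, s, k, x) :: l2 ->
      step C (mkConfig (c_srv C) (c_wst C) (c_wmode C)
                (c_rst C) (upd (c_rmode C) r (rdeliver (c_rmode C r) k s x))
                (c_req C) (l1 ++ l2) (c_tick C) (c_hist C)).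

Inductive reachable : Config -> Prop :=
  | reach0 : reachable init_config
  | reachS C C' : reachable C -> step C C' -> reachable C'.

Definition atomic_impl (v0 : V) : Prop :=
  forall C, reachable C -> atomic v0 (c_hist C).

End Exec.
End Model.

(* Let the writers w1 and w2 write v1 and v2 concurrently.  A write is a single
   round-trip, so the state of a server afterwards only depends on which of the two
   requests it served first; say the servers in B serve w2 first.  Two readers r1 and r2
   then read, and U(B) is the value returned by r1 when it collects the replies of both
   of its round-trips from a quorum avoiding some server x.  Both writes complete before
   the reads start, so atomicity forces r1 and r2 to agree in every such execution;
   playing with the quorums of r1 and with the order in which the second round-trips of
   r1 and r2 reach each server, this shows that U(B) does not depend on x.  As r1 never
   hears from x, U(B) = U(B + x), and adding the servers one at a time gives
   U(empty) = U(all).  But for B empty (resp. full) the servers are in the same state as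
   after w1 writes before w2 (resp. w2 before w1), so U(empty) = v2 and U(all) = v1. *)

From mathcomp Require Import all_boot.
From Stdlib Require Import FunctionalExtensionality.
Set Implicit Arguments. Unset Strict Implicit. Unset Printing Implicit Defensive.

Section Update.
Variables (A : eqType) (B : Type).
Implicit Types (f : A -> B) (a x : A) (b c : B).

Lemma upd_eq f a b : upd f a b a = b.
Proof. by rewrite /upd eqxx. Qed.

Lemma upd_neq f a b x : x != a -> upd f a b x = f x.
Proof. by rewrite /upd => /negbTE ->. Qed.

Lemma upd_at f g a b : f = upd g a b -> f a = b.
Proof. by move->; rewrite upd_eq. Qed.

Lemma upd_off f g a b x : f = upd g a b -> x != a -> f x = g x.
Proof. by move-> => /upd_neq->. Qed.

Lemma upd_upd f a b c : upd (upd f a b) a c = upd f a c.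
Proof. by apply: functional_extensionality => x; rewrite /upd; case: eqP. Qed.

Lemma upd_id f a : upd f a (f a) = f.
Proof. by apply: functional_extensionality => x; rewrite /upd; case: eqP => // ->. Qed.

End Update.

Section Atomicity.
Variables (R W : nat) (V : Type) (v0 : V).
Implicit Types (h : seq (Event R W V)) (l : seq nat).

Definition is_write (e : option (Event R W V)) : bool :=
  if e is Some (InvW _ _) then true else false.

Lemma index_drop_uniq (T : eqType) (s : seq T) n x :
  uniq s -> x \in drop n s -> n <= index x s.
Proof.
move=> uniq_s x_drop; rewrite leqNgt -in_take ?(mem_drop x_drop) //.
move: uniq_s; rewrite -{1}(cat_take_drop n s) cat_uniq => /and3P[_ /hasPn disj _].
exact: disj.
Qed.

Lemma last_write_take h l n :
  uniq l -> {in l, forall k, is_write (evt h k) -> index k l < n} ->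
  last_write v0 h (take n l) = last_write v0 h l.
Proof.
move=> uniq_l early; rewrite -{2}(cat_take_drop n l) /last_write foldl_cat.
have : {in drop n l, forall k, ~~ is_write (evt h k)}.
  move=> k k_drop; apply/negP => /(early k (mem_drop k_drop)).
  by rewrite ltnNge index_drop_uniq.
move: (foldl _ v0 (take n l)) => acc.
elim: {early} (drop n l) acc => //= k d IH acc no_write.
rewrite -IH => [|j j_d]; last by apply: no_write; rewrite inE j_d orbT.
by move: (no_write k (mem_head k d)); case: (evt h k) => // -[].
Qed.

Lemma atomic_reads_agree h i i' j j' r r' x y :
  atomic v0 h -> resp h i i' -> resp h j j' ->
  evt h i' = Some (RespR W r x) -> evt h j' = Some (RespR W r' y) ->
  (forall k, is_write (evt h k) -> precedes h k i /\ precedes h k j) -> x = y.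
Proof.
case=> pi [[uniq_pi _ resp_pi _ prec_pi] val_pi] ii' jj' i'x j'y wr.
have i_pi := resp_pi _ _ ii'; have j_pi := resp_pi _ _ jj'.
rewrite (val_pi _ _ _ _ i_pi ii' i'x) (val_pi _ _ _ _ j_pi jj' j'y).
by rewrite !last_write_take // => k k_pi /wr[ki kj]; apply: prec_pi.
Qed.

Lemma atomic_read_latest_write h i i' r x k0 w v :
  atomic v0 h -> resp h i i' -> evt h i' = Some (RespR W r x) ->
  evt h k0 = Some (InvW R w v) -> precedes h k0 i ->
  (forall k, is_write (evt h k) -> k != k0 -> precedes h k k0) -> x = v.
Proof.
case=> pi [[uniq_pi _ resp_pi _ prec_pi] val_pi] ii' i'x k0v k0i wr.
have i_pi := resp_pi _ _ ii'.
have k0_pi : k0 \in pi by case: k0i => k' [/resp_pi].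
have before_k0 k : k \in pi -> is_write (evt h k) -> index k pi <= index k0 pi.
  move=> k_pi; have [-> //|k_k0 /wr/(_ k_k0) kk0] := eqVneq k k0.
  exact/ltnW/prec_pi.
rewrite (val_pi _ _ _ _ i_pi ii' i'x) last_write_take // => [|k k_pi /before_k0];
  last by move/(_ k_pi)/leq_ltn_trans; apply; apply: prec_pi.
rewrite -(last_write_take (n := (index k0 pi).+1)) // (take_nth 0) ?index_mem //.
by rewrite nth_index // /last_write foldl_rcons k0v.
Qed.

End Atomicity.

Section TwoWritesThenTwoReads.
Variables (R W : nat) (V : Type) (v0 : V) (r1 r2 : 'I_R).
Hypothesis r1_r2 : r1 != r2.

Local Ltac resp_by_computation :=
  split => //; case=> [|[|[|[|[|[|[|[|k]]]]]]]] //= _ [/eqP];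
  by match goal with
     H : is_true (_ != _) |- _ => rewrite (negbTE H) || rewrite eq_sym (negbTE H)
     end.

Lemma concurrent_writes_reads_agree (wa wb : 'I_W) (va vb x y : V) : wa != wb ->
  atomic v0 [:: InvW R wa va; InvW R wb vb; RespW R V wa; RespW R V wb;
                InvR W V r1; InvR W V r2; RespR W r1 x; RespR W r2 y] -> x = y.
Proof.
move=> wa_wb hist_atomic.
apply: (atomic_reads_agree (i := 4) (i' := 6) (j := 5) (j' := 7) hist_atomic) => //;
  try by resp_by_computation.
case=> [|[|[|[|[|[|[|[|k]]]]]]]] //=; last by rewrite /evt /= nth_nil.
- by split; exists 2; split => //; resp_by_computation.
- by split; exists 3; split => //; resp_by_computation.
Qed.

Lemma sequential_writes_read_last (wa wb : 'I_W) (va vb x y : V) :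
  atomic v0 [:: InvW R wa va; RespW R V wa; InvW R wb vb; RespW R V wb;
                InvR W V r1; InvR W V r2; RespR W r1 x; RespR W r2 y] -> x = vb.
Proof.
move=> hist_atomic.
apply: (atomic_read_latest_write (i := 4) (i' := 6) (k0 := 2) hist_atomic) => //.
- by resp_by_computation.
- by exists 3; split => //; resp_by_computation.
- case=> [|[|[|[|[|[|[|[|k]]]]]]]] //=; last by rewrite /evt /= nth_nil.
  by exists 1; split => //; resp_by_computation.
Qed.

End TwoWritesThenTwoReads.

Section Executions.
Variables (S R W : nat) (V : Type) (t : nat) (I : Impl S R W V).
Local Notation reachable := (@reachable S R W V t I).
Implicit Types (C : Config I) (srv : 'I_S -> SState I) (c : client R W) (m : 'I_S -> Msg I)
  (Q : {set 'I_S}).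

Definition serve srv c m (A : pred 'I_S) : 'I_S -> SState I :=
  fun s => if A s then (s_recv s (srv s) c (m s)).1 else srv s.

Definition reply srv c m (s : 'I_S) : Reply I := (s_recv s (srv s) c (m s)).2.

Lemma serve_block C J K c k m (L : seq 'I_S) (p : pred 'I_S) :
  uniq L -> reachable C -> c_req C = J ++ [seq (s, c, k, m s) | s <- L] ++ K ->
  reachable (mkConfig (serve (c_srv C) c m [in [seq s <- L | p s]]) (c_wst C) (c_wmode C)
    (c_rst C) (c_rmode C) (J ++ [seq (s, c, k, m s) | s <- L & ~~ p s] ++ K)
    (c_rep C ++ [seq (c, s, k, reply (c_srv C) c m s) | s <- L & p s]) (c_tick C) (c_hist C)).
Proof.
elim: L J C => [|x L IH] J C /=.
  move=> _ HC <-; rewrite cats0.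
  have -> : serve (c_srv C) c m [in [::]] = c_srv C by [].
  by case: C HC.
case/andP=> x_L uniq_L HC req; case: (boolP (p x)) => px /=.
- case E: (s_recv x (c_srv C x) c (m x)) => [st y].
  have := IH J _ uniq_L (reachS HC (st_server t req E)) erefl; rewrite -catA /=.
  have -> : serve (upd (c_srv C) x st) c m [in [seq s <- L | p s]] =
            serve (c_srv C) c m [in x :: [seq s <- L | p s]].
    apply: functional_extensionality => s; rewrite /serve /upd inE.
    by case: eqP => [->|_] //=; rewrite E mem_filter (negbTE x_L) andbF.
  have -> : y = reply (c_srv C) c m x by rewrite /reply E.
  congr (reachable (mkConfig _ _ _ _ _ _ (_ ++ _ :: _) _ _)); apply/eq_in_map => s.
  rewrite mem_filter => /andP[_ s_L]; rewrite /reply /upd.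
  by case: eqP s_L => [->|]; first by rewrite (negbTE x_L).
- have req' : c_req C = rcons J (x, c, k, m x) ++ [seq (s, c, k, m s) | s <- L] ++ K
    by rewrite req cat_rcons.
  by have := IH _ _ uniq_L HC req'; rewrite cat_rcons.
Qed.

Lemma eq_serve srv c m (A B : pred 'I_S) : A =1 B -> serve srv c m A = serve srv c m B.
Proof. by move=> AB; apply: functional_extensionality => s; rewrite /serve AB. Qed.

Lemma serve_bcast C J K c k m :
  reachable C -> c_req C = J ++ bcast c k m ++ K ->
  reachable (mkConfig (serve (c_srv C) c m predT) (c_wst C) (c_wmode C) (c_rst C) (c_rmode C)
    (J ++ K) (c_rep C ++ [seq (c, s, k, reply (c_srv C) c m s) | s <- enum 'I_S])
    (c_tick C) (c_hist C)).
Proof.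
move=> HC req; have := serve_block predT (enum_uniq 'I_S) HC req.
by rewrite filter_pred0 filter_predT (@eq_serve _ _ _ _ predT) // => s; rewrite mem_enum.
Qed.

Lemma serve_interleaved C J c1 k1 m1 c2 k2 m2 (B : pred 'I_S) :
  reachable C -> c_req C = J ++ bcast c1 k1 m1 ++ bcast c2 k2 m2 ->
  reachable (mkConfig (serve (serve (serve (c_srv C) c2 m2 B) c1 m1 predT) c2 m2 (predC B))
    (c_wst C) (c_wmode C) (c_rst C) (c_rmode C) J
    (c_rep C ++ [seq (c2, s, k2, reply (c_srv C) c2 m2 s) | s <- enum 'I_S & B s]
       ++ [seq (c1, s, k1, reply (serve (c_srv C) c2 m2 B) c1 m1 s) | s <- enum 'I_S]
       ++ [seq (c2, s, k2, reply (serve (serve (c_srv C) c2 m2 B) c1 m1 predT) c2 m2 s)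
             | s <- enum 'I_S & ~~ B s])
    (c_tick C) (c_hist C)).
Proof.
move=> HC req.
have req1 : c_req C = (J ++ bcast c1 k1 m1) ++ bcast c2 k2 m2 ++ [::] by rewrite req catA cats0.
have HC1 := serve_block B (enum_uniq 'I_S) HC req1.
rewrite (@eq_serve _ _ _ _ B) /= in HC1 => [|s]; last by rewrite mem_filter mem_enum andbT.
have HC2 := serve_bcast HC1 (esym (catA _ _ _)).
have uniq_notB := filter_uniq (fun s => ~~ B s) (enum_uniq 'I_S).
have HC3 := serve_block predT uniq_notB HC2 erefl.
rewrite filter_pred0 filter_predT /= !cats0 -!catA in HC3.
rewrite (@eq_serve _ _ _ _ (predC B)) in HC3 => [|s]; last by rewrite mem_filter mem_enum andbT.
exact HC3.
Qed.

Lemma deliver_block_r C J K r k (f : 'I_S -> Reply I) (L : seq 'I_S) (p : pred 'I_S) :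
  reachable C -> c_rep C = J ++ [seq (inr r : client R W, s, k, f s) | s <- L] ++ K ->
  reachable (mkConfig (c_srv C) (c_wst C) (c_wmode C) (c_rst C)
    (upd (c_rmode C) r
       (foldl (fun md s => rdeliver t md k s (f s)) (c_rmode C r) [seq s <- L | p s]))
    (c_req C) (J ++ [seq (inr r : client R W, s, k, f s) | s <- L & ~~ p s] ++ K)
    (c_tick C) (c_hist C)).
Proof.
elim: L J C => [|x L IH] J C /= HC rep.
  by rewrite upd_id -rep; case: C HC {rep}.
case: (boolP (p x)) => px /=.
- have := IH J _ (reachS HC (st_client_r t rep)) erefl.
  by rewrite /= upd_upd upd_eq.
- have rep' : c_rep C = rcons J (inr r, x, k, f x) ++ [seq (inr r, s, k, f s) | s <- L] ++ K
    by rewrite rep cat_rcons.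
  by have := IH _ _ HC rep'; rewrite cat_rcons.
Qed.

Lemma deliver_block_w C J K w k (f : 'I_S -> Reply I) (L : seq 'I_S) (p : pred 'I_S) :
  reachable C -> c_rep C = J ++ [seq (inl w : client R W, s, k, f s) | s <- L] ++ K ->
  reachable (mkConfig (c_srv C) (c_wst C)
    (upd (c_wmode C) w
       (foldl (fun md s => wdeliver t md k s (f s)) (c_wmode C w) [seq s <- L | p s]))
    (c_rst C) (c_rmode C) (c_req C)
    (J ++ [seq (inl w : client R W, s, k, f s) | s <- L & ~~ p s] ++ K)
    (c_tick C) (c_hist C)).
Proof.
elim: L J C => [|x L IH] J C /= HC rep.
  by rewrite upd_id -rep; case: C HC {rep}.
case: (boolP (p x)) => px /=.
- have := IH J _ (reachS HC (st_client_w t rep)) erefl.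
  by rewrite /= upd_upd upd_eq.
- have rep' : c_rep C = rcons J (inl w, x, k, f x) ++ [seq (inl w, s, k, f s) | s <- L] ++ K
    by rewrite rep cat_rcons.
  by have := IH _ _ HC rep'; rewrite cat_rcons.
Qed.

Definition collect (L : seq 'I_S) (f : 'I_S -> Reply I) (rep : replies I) : replies I :=
  foldl (fun rep s => addrep t rep s (f s)) rep L.

Definition restrict (Q : {set 'I_S}) (f : 'I_S -> Reply I) : replies I :=
  fun s => if s \in Q then Some (f s) else None.

Definition collecting (ph : replies I -> RMode I) k :=
  forall rep s x, rdeliver t (ph rep) k s x = ph (addrep t rep s x).

Lemma RPh1_collecting k : collecting (RPh1 k) k.
Proof. by move=> rep s x; rewrite /= eqxx. Qed.

Lemma RPh2_collecting k : collecting (RPh2 k) k.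
Proof. by move=> rep s x; rewrite /= eqxx. Qed.

Lemma foldl_rdeliver ph k : collecting ph k -> forall f L rep,
  foldl (fun md s => rdeliver t md k s (f s)) (ph rep) L = ph (collect L f rep).
Proof. by move=> ph_k f L; elim: L => //= x L IH rep; rewrite ph_k IH. Qed.

Lemma foldl_wdeliver v k f L rep :
  foldl (fun md s => wdeliver t md k s (f s)) (WBusy v k rep) L = WBusy v k (collect L f rep).
Proof. by elim: L rep => //= x L IH rep; rewrite eqxx IH. Qed.

Lemma eq_in_collect L f g rep : {in L, f =1 g} -> collect L f rep = collect L g rep.
Proof.
elim: L rep => //= x L IH rep fg; rewrite /collect /= fg ?mem_head //.
by apply: IH => s s_L; apply: fg; rewrite inE s_L orbT.
Qed.

Lemma nrep_restrict Q f : nrep (restrict Q f) = #|Q|.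
Proof. by apply: eq_card => s; rewrite inE /restrict; case: (s \in Q). Qed.

Lemma eq_restrict Q f g : {in Q, f =1 g} -> restrict Q f = restrict Q g.
Proof.
by move=> fg; apply: functional_extensionality => s; rewrite /restrict; case: ifP => // /fg->.
Qed.

Lemma quorum_restrict Q f : #|Q| = S - t -> quorum t (restrict Q f).
Proof. by rewrite /quorum nrep_restrict => ->. Qed.

Lemma collect_restrict L f :
  uniq L -> size L <= S - t -> collect L f (no_rep I) = restrict [set s in L] f.
Proof.
elim/last_ind: L => [|L x IH].
  by move=> _ _; apply: functional_extensionality => s; rewrite /restrict inE.
rewrite rcons_uniq size_rcons => /andP[x_L uniq_L] size_L.
rewrite /collect foldl_rcons -/(collect L f _) IH ?(ltnW size_L) //.
rewrite /addrep /restrict inE (negbTE x_L) nrep_restrict.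
have -> : #|[set s in L]| = size L.
  by rewrite -(card_uniqP uniq_L); apply: eq_card => s; rewrite inE.
rewrite size_L; apply: functional_extensionality => s.
by rewrite /upd !inE mem_rcons inE; case: eqP => [->|].
Qed.

Definition quorum_without (x : 'I_S) : {set 'I_S} := [set s in take (S - t) (enum [set~ x])].

Lemma quorum_without_card x : 0 < t -> #|quorum_without x| = S - t.
Proof.
move=> t_pos; have uniq_take := take_uniq (S - t) (enum_uniq [set~ x]).
rewrite -[RHS](@size_takel _ _ (enum [set~ x])); last first.
  by rewrite -cardE cardsC1 card_ord -subn1 leq_sub2l.
by rewrite -(card_uniqP uniq_take); apply: eq_card => s; rewrite inE.
Qed.

Lemma quorum_without_notin x : x \notin quorum_without x.
Proof. by rewrite inE; apply/negP => /mem_take; rewrite mem_enum !inE eqxx. Qed.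

Lemma collect_quorum (L : seq 'I_S) Q f :
  perm_eq L [seq s <- enum 'I_S | s \in Q] -> #|Q| <= S - t ->
  collect L f (no_rep I) = restrict Q f.
Proof.
move=> LQ card_Q; rewrite collect_restrict.
- by congr restrict; apply/setP => s; rewrite inE (perm_mem LQ) mem_filter mem_enum andbT.
- by rewrite (perm_uniq LQ) filter_uniq ?enum_uniq.
- by rewrite (perm_size LQ); apply: leq_trans card_Q; rewrite cardE enumT.
Qed.

Lemma collect_quorum_split Q (B : pred 'I_S) f g :
  #|Q| <= S - t ->
  collect [seq s <- [seq s <- enum 'I_S | ~~ B s] | s \in Q] g
    (collect [seq s <- [seq s <- enum 'I_S | B s] | s \in Q] f (no_rep I)) =
  restrict Q (fun s => if B s then f s else g s).
Proof.
move=> card_Q; set h := fun s => if B s then f s else g s.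
rewrite (@eq_in_collect _ f h) => [|s]; last by rewrite !mem_filter /h => /and3P[_ -> _].
rewrite (@eq_in_collect _ g h) => [|s]; last by rewrite !mem_filter /h => /and3P[_ /negbTE-> _].
rewrite /collect -foldl_cat -/(collect _ h _) -filter_cat; apply: collect_quorum card_Q.
apply: perm_filter; have /permPl := perm_filterC B (enum 'I_S); exact.
Qed.

Lemma read_round C J r k m Q ph :
  collecting ph k -> #|Q| <= S - t -> reachable C ->
  c_rmode C r = ph (no_rep I) -> c_req C = J ++ bcast (inr r) k m ->
  exists rep, reachable (mkConfig (serve (c_srv C) (inr r) m predT) (c_wst C) (c_wmode C)
    (c_rst C) (upd (c_rmode C) r (ph (restrict Q (reply (c_srv C) (inr r) m)))) J rep
    (c_tick C) (c_hist C)).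
Proof.
move=> ph_k card_Q HC mode req; rewrite -[bcast _ _ _]cats0 in req.
have := deliver_block_r [in Q] (serve_bcast HC req) (esym (etrans (catA _ _ _) (cats0 _))).
rewrite /= mode (foldl_rdeliver ph_k) cats0 (@collect_quorum _ Q) // => HC'.
by eexists; exact: HC'.
Qed.

Lemma write_round C J w v k m Q :
  #|Q| <= S - t -> reachable C ->
  c_wmode C w = WBusy v k (no_rep I) -> c_req C = J ++ bcast (inl w) k m ->
  exists rep, reachable (mkConfig (serve (c_srv C) (inl w) m predT) (c_wst C)
    (upd (c_wmode C) w (WBusy v k (restrict Q (reply (c_srv C) (inl w) m)))) (c_rst C) (c_rmode C)
    J rep (c_tick C) (c_hist C)).
Proof.
move=> card_Q HC mode req; rewrite -[bcast _ _ _]cats0 in req.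
have := deliver_block_w [in Q] (serve_bcast HC req) (esym (etrans (catA _ _ _) (cats0 _))).
rewrite /= mode foldl_wdeliver cats0 (@collect_quorum _ Q) // => HC'.
by eexists; exact: HC'.
Qed.

Lemma concurrent_read_round C J (ra rb : 'I_R) ka kb ma mb (Qa Qb : {set 'I_S}) (P : pred 'I_S) :
  ra != rb -> #|Qa| <= S - t -> #|Qb| <= S - t -> reachable C ->
  c_rmode C ra = RPh2 ka (no_rep I) -> c_rmode C rb = RPh2 kb (no_rep I) ->
  c_req C = J ++ bcast (inr ra) ka ma ++ bcast (inr rb) kb mb ->
  exists2 C', reachable C' & [/\
    c_rmode C' ra =
      RPh2 ka (restrict Qa (reply (serve (c_srv C) (inr rb) mb (predC P)) (inr ra) ma)),
    c_rmode C' rb = RPh2 kb (restrict Qb (reply (serve (c_srv C) (inr ra) ma P) (inr rb) mb)),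
    c_rst C' = c_rst C & c_hist C' = c_hist C].
Proof.
move=> ra_rb card_Qa card_Qb HC mode_a mode_b req.
have HC1 := serve_interleaved (predC P) HC req; rewrite catA in HC1.
have HC2 := deliver_block_r [in Qa] HC1 erefl; rewrite /= -catA in HC2.
have HC3 := deliver_block_r [in Qb] HC2 erefl; rewrite /= !catA -[X in _ ++ X]cats0 in HC3.
have HC4 := deliver_block_r [in Qb] HC3 erefl.
eexists; first exact: HC4.
have rb_ra : rb != ra by rewrite eq_sym.
split => //=.
- rewrite !(upd_neq _ _ ra_rb) upd_eq mode_a (foldl_rdeliver (RPh2_collecting _)).
  by rewrite (@collect_quorum _ Qa).
- rewrite !upd_eq (upd_neq _ _ rb_ra) mode_b !(foldl_rdeliver (RPh2_collecting _)).
  rewrite collect_quorum_split //; congr (RPh2 _ (restrict _ _)).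
  apply: functional_extensionality => s; rewrite /reply /serve /=.
  by case: (P s).
Qed.

Lemma write_solo C w v Q : #|Q| = S - t -> reachable C -> c_wmode C w = WIdle I ->
  let m := w_send w (c_wst C w) v in
  exists rep, reachable (mkConfig (serve (c_srv C) (inl w) m predT)
    (upd (c_wst C) w (w_end w (c_wst C w) v (restrict Q (reply (c_srv C) (inl w) m))))
    (c_wmode C) (c_rst C) (c_rmode C) (c_req C) rep (c_tick C).+1
    (c_hist C ++ [:: InvW R w v; RespW R V w])).
Proof.
move=> card_Q HC idle m.
have [rep HC1] :=
  write_round (eq_leq card_Q) (reachS HC (st_inv_write t v idle)) (upd_eq _ _ _) erefl.
have := reachS HC1 (st_end_write (w := w) (v := v) (k := c_tick C)
  (rep := restrict Q (reply (c_srv C) (inl w) m)) _ (quorum_restrict _ card_Q)).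
rewrite /= !upd_upd upd_eq -idle upd_id -!cats1 -catA => /(_ erefl) HC2.
by exists rep.
Qed.

Definition wmsg (w : 'I_W) (v : V) : 'I_S -> Msg I := w_send w (w_init I w) v.

Lemma sequential_writes wa wb va vb Q : #|Q| = S - t -> wa != wb -> exists2 C, reachable C &
  [/\ c_srv C = serve (serve (s_init I) (inl wa) (wmsg wa va) predT) (inl wb) (wmsg wb vb) predT,
    c_rst C = r_init I, forall r, c_rmode C r = RIdle I
    & c_hist C = [:: InvW R wa va; RespW R V wa; InvW R wb vb; RespW R V wb]].
Proof.
move=> card_Q wa_wb; have wb_wa : wb != wa by rewrite eq_sym.
have [rep1 HC1] := write_solo (w := wa) va card_Q (reach0 t I) erefl.
set C1 := mkConfig _ _ _ _ _ _ _ _ _ in HC1.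
have [rep2 HC2] := write_solo (C := C1) (w := wb) vb card_Q HC1 erefl.
by eexists; first exact: HC2; rewrite /= upd_neq.
Qed.

Section Writes.
Variables (w1 w2 : 'I_W) (v1 v2 : V) (Q : {set 'I_S}).
Hypotheses (w1_w2 : w1 != w2) (card_Q : #|Q| = S - t).
Local Notation cw1 := (inl w1 : client R W).
Local Notation cw2 := (inl w2 : client R W).

(* [B] is the set of servers at which w2's write is served before w1's. *)
Definition concurrent_servers (B : pred 'I_S) :=
  serve (serve (serve (s_init I) cw2 (wmsg w2 v2) B) cw1 (wmsg w1 v1) predT)
    cw2 (wmsg w2 v2) (predC B).

Lemma concurrent_writes B : exists2 C, reachable C &
  [/\ c_srv C = concurrent_servers B, c_rst C = r_init I, forall r, c_rmode C r = RIdle I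
    & c_hist C = [:: InvW R w1 v1; InvW R w2 v2; RespW R V w1; RespW R V w2]].
Proof.
have w2_w1 : w2 != w1 by rewrite eq_sym.
have HC1 := reachS (reach0 t I) (st_inv_write t (C := init_config I) (w := w1) v1 erefl).
set C1 := mkConfig _ _ _ _ _ _ _ _ _ in HC1.
have HC2 := reachS HC1 (st_inv_write t (C := C1) v2 (upd_neq _ _ w2_w1)).
have HC3 := serve_interleaved (J := [::]) B HC2 erefl.
have HC4 := deliver_block_w [in Q] HC3 (catA _ _ _).
set C4 := mkConfig _ _ _ _ _ _ _ _ _ in HC4.
have mode4 : c_wmode C4 w1 =
    WBusy v1 0 (restrict Q (reply (serve (s_init I) cw2 (wmsg w2 v2) B) cw1 (wmsg w1 v1))).
  by rewrite /C4 /= upd_eq upd_neq // upd_eq foldl_wdeliver (@collect_quorum _ Q) ?card_Q.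
have HC5 := reachS HC4 (st_end_write mode4 (quorum_restrict _ card_Q)).
have HC6 := deliver_block_w (J := [::]) [in Q] HC5 erefl.
rewrite /= catA -[X in _ ++ X]cats0 in HC6.
have HC7 := deliver_block_w [in Q] HC6 erefl.
set C7 := mkConfig _ _ _ _ _ _ _ _ _ in HC7.
pose f2 s := if B s then reply (s_init I) cw2 (wmsg w2 v2) s else
  reply (serve (serve (s_init I) cw2 (wmsg w2 v2) B) cw1 (wmsg w1 v1) predT) cw2 (wmsg w2 v2) s.
have mode7 : c_wmode C7 w2 = WBusy v2 1 (restrict Q f2).
  rewrite /C7 /= !upd_eq !(upd_neq _ _ w2_w1) upd_eq !foldl_wdeliver.
  by rewrite collect_quorum_split ?card_Q.
by eexists; first exact: reachS HC7 (st_end_write mode7 (quorum_restrict _ card_Q)).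
Qed.

Lemma concurrent_servers_pred0 :
  concurrent_servers pred0 = serve (serve (s_init I) cw1 (wmsg w1 v1) predT) cw2 (wmsg w2 v2) predT.
Proof. exact: functional_extensionality. Qed.

Lemma concurrent_servers_predT :
  concurrent_servers predT = serve (serve (s_init I) cw2 (wmsg w2 v2) predT) cw1 (wmsg w1 v1) predT.
Proof. exact: functional_extensionality. Qed.

Lemma concurrent_servers_at B B' s : B s = B' s -> concurrent_servers B s = concurrent_servers B' s.
Proof. by rewrite /concurrent_servers /serve /= => ->. Qed.

End Writes.

Lemma read_start C r Q : #|Q| = S - t -> reachable C -> c_rmode C r = RIdle I ->
  exists2 C', reachable C' & [/\ c_srv C' = serve (c_srv C) (inr r) (r_send1 r (c_rst C r)) predT,
    c_rst C' = c_rst C,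
    c_rmode C' = upd (c_rmode C) r
      (RPh1 (c_tick C) (restrict Q (reply (c_srv C) (inr r) (r_send1 r (c_rst C r))))),
    c_tick C' = (c_tick C).+1 & c_hist C' = rcons (c_hist C) (InvR W V r)].
Proof.
move=> card_Q HC idle.
have [rep HC'] := read_round (RPh1_collecting _) (eq_leq card_Q)
  (reachS HC (st_inv_read t idle)) (upd_eq _ _ _) erefl.
by eexists; first exact: HC'; rewrite /= upd_upd.
Qed.

Lemma read_finish1 C r k rep st v : reachable C -> c_rmode C r = RPh1 k rep -> quorum t rep ->
  r_end1 r (c_rst C r) rep = (st, Some v) ->
  exists2 C', reachable C' & [/\ c_srv C' = c_srv C, c_rst C' = upd (c_rst C) r st,
    c_rmode C' = upd (c_rmode C) r (RIdle I) & c_hist C' = rcons (c_hist C) (RespR W r v)].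
Proof. by move=> HC mode q E; eexists; first exact: reachS HC (st_end_read1_ret mode q E). Qed.

Lemma read_continue C r k rep st Q : #|Q| = S - t -> reachable C -> c_rmode C r = RPh1 k rep ->
  quorum t rep -> r_end1 r (c_rst C r) rep = (st, None) ->
  exists2 C', reachable C' & [/\ c_srv C' = serve (c_srv C) (inr r) (r_send2 r st) predT,
    c_rst C' = upd (c_rst C) r st,
    c_rmode C' = upd (c_rmode C) r
      (RPh2 (c_tick C) (restrict Q (reply (c_srv C) (inr r) (r_send2 r st))))
    & c_hist C' = c_hist C].
Proof.
move=> card_Q HC mode q E.
have [rep' HC'] := read_round (RPh2_collecting _) (eq_leq card_Q)
  (reachS HC (st_end_read1_cont mode q E)) (upd_eq _ _ _) erefl.
by eexists; first exact: HC'; rewrite /= upd_upd.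
Qed.

Lemma read_finish2 C r k rep : reachable C -> c_rmode C r = RPh2 k rep -> quorum t rep ->
  exists2 C', reachable C' & [/\ c_rst C' = upd (c_rst C) r (r_end2 r (c_rst C r) rep).1,
    c_rmode C' = upd (c_rmode C) r (RIdle I)
    & c_hist C' = rcons (c_hist C) (RespR W r (r_end2 r (c_rst C r) rep).2)].
Proof.
move=> HC mode q; eexists; first exact: reachS HC (st_end_read2 mode q (surjective_pairing _)).
by [].
Qed.

Section TwoReads.
Variables (r1 r2 : 'I_R) (Q2 : {set 'I_S}).
Hypotheses (r1_r2 : r1 != r2) (card_Q2 : #|Q2| = S - t).
Local Notation cr1 := (inr r1 : client R W).
Local Notation cr2 := (inr r2 : client R W).
Implicit Types (sg : 'I_S -> SState I) (P : pred 'I_S) (Qa Qc : {set 'I_S}).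

Definition msg1 (r : 'I_R) : 'I_S -> Msg I := r_send1 r (r_init I r).

Definition after_phase1 sg := serve (serve sg cr1 (msg1 r1) predT) cr2 (msg1 r2) predT.

Definition r1_phase1 sg Qa := r_end1 r1 (r_init I r1) (restrict Qa (reply sg cr1 (msg1 r1))).

Definition r2_phase1 sg :=
  r_end1 r2 (r_init I r2) (restrict Q2 (reply (serve sg cr1 (msg1 r1) predT) cr2 (msg1 r2))).

Definition r1_msg2 sg Qa := r_send2 r1 (r1_phase1 sg Qa).1.
Definition r2_msg2 sg := r_send2 r2 (r2_phase1 sg).1.

(* [P] is the set of servers at which r1's second-round message is served before r2's. *)
Definition r1_round2_servers sg P :=
  if (r2_phase1 sg).2 is None then serve (after_phase1 sg) cr2 (r2_msg2 sg) (predC P)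
  else after_phase1 sg.

Definition r2_round2_servers sg P Qa :=
  if (r1_phase1 sg Qa).2 is None then serve (after_phase1 sg) cr1 (r1_msg2 sg Qa) P
  else after_phase1 sg.

Definition r1_value sg P Qa Qc : V :=
  if (r1_phase1 sg Qa).2 is Some v then v else
  (r_end2 r1 (r1_phase1 sg Qa).1
     (restrict Qc (reply (r1_round2_servers sg P) cr1 (r1_msg2 sg Qa)))).2.

Definition r2_value sg P Qa : V :=
  if (r2_phase1 sg).2 is Some v then v else
  (r_end2 r2 (r2_phase1 sg).1
     (restrict Q2 (reply (r2_round2_servers sg P Qa) cr2 (r2_msg2 sg)))).2.

Lemma r1_value_ext sg P P' Qa Qc :
  {in Qc, P =1 P'} -> r1_value sg P Qa Qc = r1_value sg P' Qa Qc.
Proof.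
move=> PP'; rewrite /r1_value /r1_round2_servers; case: (r1_phase1 sg Qa).2 => //.
case: (r2_phase1 sg).2 => //; congr (r_end2 _ _ _).2; apply: eq_restrict => s /PP' Ps.
by rewrite /reply /serve /= Ps.
Qed.

Lemma r2_value_pred0 sg Qa Qa' : r2_value sg pred0 Qa = r2_value sg pred0 Qa'.
Proof.
rewrite /r2_value /r2_round2_servers; case: (r2_phase1 sg).2 => //.
by case: (r1_phase1 sg Qa).2; case: (r1_phase1 sg Qa').2.
Qed.

Lemma r1_value_local sg sg' Q : {in Q, sg =1 sg'} -> r1_value sg predT Q Q = r1_value sg' predT Q Q.
Proof.
have reply_Q srv srv' c m : {in Q, srv =1 srv'} ->
    restrict Q (reply srv c m) = restrict Q (reply srv' c m).
  by move=> srv_Q; apply: eq_restrict => s /srv_Q; rewrite /reply => ->.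
move=> sg_Q.
have E1 : r1_phase1 sg Q = r1_phase1 sg' Q by rewrite /r1_phase1 (reply_Q _ _ _ _ sg_Q).
rewrite /r1_value /r1_msg2 E1; case: (r1_phase1 sg' Q).2 => //.
congr (r_end2 _ _ _).2; apply: reply_Q => s /sg_Q sg_s.
rewrite /r1_round2_servers; case: (r2_phase1 sg).2; case: (r2_phase1 sg').2 => *;
  by rewrite /serve /= /after_phase1 /serve sg_s.
Qed.

Lemma reads_continue_concurrently C k1 rep1 st1 k2 rep2 st2 P Q : #|Q| = S - t -> reachable C ->
  c_rmode C r1 = RPh1 k1 rep1 -> quorum t rep1 -> r_end1 r1 (c_rst C r1) rep1 = (st1, None) ->
  c_rmode C r2 = RPh1 k2 rep2 -> quorum t rep2 -> r_end1 r2 (c_rst C r2) rep2 = (st2, None) ->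
  exists2 C', reachable C' & [/\ c_rst C' = upd (upd (c_rst C) r1 st1) r2 st2,
    c_rmode C' r1 = RPh2 (c_tick C) (restrict Q
      (reply (serve (c_srv C) cr2 (r_send2 r2 st2) (predC P)) cr1 (r_send2 r1 st1))),
    c_rmode C' r2 = RPh2 (c_tick C).+1 (restrict Q2
      (reply (serve (c_srv C) cr1 (r_send2 r1 st1) P) cr2 (r_send2 r2 st2)))
    & c_hist C' = c_hist C].
Proof.
move=> card_Q HC mode1 q1 E1 mode2 q2 E2; have r2_r1 : r2 != r1 by rewrite eq_sym.
have HC1 := reachS HC (st_end_read1_cont mode1 q1 E1).
set C1 := mkConfig _ _ _ _ _ _ _ _ _ in HC1.
rewrite -(upd_neq (c_rst C) st1 r2_r1) in E2.
have HC2 := reachS HC1 (st_end_read1_cont (C := C1) (etrans (upd_neq _ _ r2_r1) mode2) q2 E2).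
have [C' HC' [mode1' mode2' rst' hist']] :=
  concurrent_read_round P r1_r2 (eq_leq card_Q) (eq_leq card_Q2) HC2
    (etrans (upd_neq _ _ r1_r2) (upd_eq _ _ _)) (upd_eq _ _ _) (esym (catA _ _ _)).
by exists C'; rewrite // mode1' mode2' rst'.
Qed.

Lemma reads_start C Qa : #|Qa| = S - t -> reachable C ->
  c_rst C = r_init I -> c_rmode C r1 = RIdle I -> c_rmode C r2 = RIdle I ->
  exists2 D, reachable D & [/\ c_srv D = after_phase1 (c_srv C), c_rst D = r_init I,
    c_rmode D r1 = RPh1 (c_tick C) (restrict Qa (reply (c_srv C) cr1 (msg1 r1))),
    c_rmode D r2 = RPh1 (c_tick C).+1
      (restrict Q2 (reply (serve (c_srv C) cr1 (msg1 r1) predT) cr2 (msg1 r2)))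
    & c_hist D = c_hist C ++ [:: InvR W V r1; InvR W V r2]].
Proof.
move=> card_Qa HC rst idle1 idle2; have r2_r1 : r2 != r1 by rewrite eq_sym.
have [C1 HC1 [srv1 rst1 mode1 tick1 hist1]] := read_start card_Qa HC idle1.
have idle2' : c_rmode C1 r2 = RIdle I by rewrite mode1 upd_neq.
have [C2 HC2 [srv2 rst2 mode2 _ hist2]] := read_start card_Q2 HC1 idle2'.
exists C2 => //; rewrite srv2 rst2 mode2 upd_eq (upd_neq _ _ r1_r2) mode1 upd_eq srv1 rst1 tick1.
by rewrite hist2 hist1 rst -!cats1 -catA.
Qed.

Lemma two_reads C P Qa Qc : #|Qa| = S - t -> #|Qc| = S - t -> reachable C ->
  c_rst C = r_init I -> c_rmode C r1 = RIdle I -> c_rmode C r2 = RIdle I ->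
  exists2 C', reachable C' & c_hist C' = c_hist C ++
    [:: InvR W V r1; InvR W V r2; RespR W r1 (r1_value (c_srv C) P Qa Qc);
        RespR W r2 (r2_value (c_srv C) P Qa)].
Proof.
move=> card_Qa card_Qc HC rst idle1 idle2; have r2_r1 : r2 != r1 by rewrite eq_sym.
have [D HD [srvD rstD mode1 mode2 histD]] := reads_start card_Qa HC rst idle1 idle2.
have q1 := quorum_restrict (reply (c_srv C) cr1 (msg1 r1)) card_Qa.
have q2 := quorum_restrict (reply (serve (c_srv C) cr1 (msg1 r1) predT) cr2 (msg1 r2)) card_Q2.
rewrite /r1_value /r2_value /r1_round2_servers /r2_round2_servers /r1_msg2 /r2_msg2 -srvD.
case E1 : (r1_phase1 _ Qa) => [x1 [v1|]]; case E2 : (r2_phase1 _) => [x2 [v2|]] /=;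
  rewrite /r1_phase1 -rstD in E1; rewrite /r2_phase1 -rstD in E2.
- have [D1 HD1 [_ rst1 mode1' hist1]] := read_finish1 HD mode1 q1 E1.
  rewrite -(upd_off rst1 r2_r1) in E2.
  have [D2 HD2 [_ _ _ hist2]] := read_finish1 HD1 (etrans (upd_off mode1' r2_r1) mode2) q2 E2.
  by exists D2; rewrite // hist2 hist1 histD -!cats1 -!catA.
- have [D1 HD1 [srv1 rst1 mode1' hist1]] := read_finish1 HD mode1 q1 E1.
  rewrite -(upd_off rst1 r2_r1) in E2.
  have [D2 HD2 [_ rst2 mode2' hist2]] :=
    read_continue card_Q2 HD1 (etrans (upd_off mode1' r2_r1) mode2) q2 E2.
  have [D3 HD3 [_ _ hist3]] := read_finish2 HD2 (upd_at mode2') (quorum_restrict _ card_Q2).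
  by exists D3; rewrite // hist3 hist2 hist1 histD (upd_at rst2) srv1 -!cats1 -!catA.
- have [D1 HD1 [srv1 rst1 mode1' hist1]] := read_continue card_Qc HD mode1 q1 E1.
  have [D2 HD2 [rst2 mode2' hist2]] := read_finish2 HD1 (upd_at mode1') (quorum_restrict _ card_Qc).
  rewrite -(upd_off rst1 r2_r1) -(upd_off rst2 r2_r1) in E2.
  have mode2'' := etrans (upd_off mode2' r2_r1) (etrans (upd_off mode1' r2_r1) mode2).
  have [D3 HD3 [_ _ _ hist3]] := read_finish1 HD2 mode2'' q2 E2.
  by exists D3; rewrite // hist3 hist2 hist1 histD (upd_at rst1) -!cats1 -!catA.
- have [D1 HD1 [rst1 mode1' mode2' hist1]] :=
    reads_continue_concurrently P card_Qc HD mode1 q1 E1 mode2 q2 E2.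
  have [D2 HD2 [rst2 mode2'' hist2]] := read_finish2 HD1 mode1' (quorum_restrict _ card_Qc).
  have [D3 HD3 [_ _ hist3]] :=
    read_finish2 HD2 (etrans (upd_off mode2'' r2_r1) mode2') (quorum_restrict _ card_Q2).
  exists D3; rewrite // hist3 hist2 hist1 histD (upd_off rst2 r2_r1) rst1 upd_eq.
  by rewrite upd_neq // upd_eq -!cats1 -!catA.
Qed.

Section Agreement.
Hypothesis t_pos : 0 < t.
Variable sg : 'I_S -> SState I.
Hypothesis agree : forall P Qa Qc,
  #|Qa| = S - t -> #|Qc| = S - t -> r1_value sg P Qa Qc = r2_value sg P Qa.

Lemma r1_value_quorum2_indep P Qa Qc Qc' : #|Qa| = S - t -> #|Qc| = S - t -> #|Qc'| = S - t ->
  r1_value sg P Qa Qc = r1_value sg P Qa Qc'.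
Proof.
by move=> Qa_card Qc_card Qc'_card; rewrite (agree P Qa_card Qc_card) (agree P Qa_card Qc'_card).
Qed.

Lemma r1_value_order_indep P Qa Qc : #|Qa| = S - t -> #|Qc| = S - t ->
  r1_value sg P Qa Qc = r1_value sg predT Qa Qc.
Proof.
move=> Qa_card Qc_card; pose P_ (l : seq 'I_S) s := (s \in l) || P s.
have step l : r1_value sg (P_ l) Qa Qc = r1_value sg P Qa Qc.
  elim: l => [|x l IH]; first exact: r1_value_ext.
  have x_card := quorum_without_card x t_pos.
  rewrite (r1_value_quorum2_indep _ _ _ x_card) // (@r1_value_ext _ _ (P_ l)) => [|s s_x].
    by rewrite -(r1_value_quorum2_indep _ _ Qc_card).
  rewrite /P_ inE; case: eqP s_x => // ->; by rewrite (negbTE (quorum_without_notin x)).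
rewrite -(step (enum 'I_S)); apply: r1_value_ext => s _; by rewrite /P_ mem_enum.
Qed.

Lemma r1_value_const Qa Qc Qa' Qc' :
  #|Qa| = S - t -> #|Qc| = S - t -> #|Qa'| = S - t -> #|Qc'| = S - t ->
  r1_value sg predT Qa Qc = r1_value sg predT Qa' Qc'.
Proof.
move=> Qa_card Qc_card Qa'_card Qc'_card.
rewrite -(r1_value_order_indep pred0) // (agree pred0 Qa_card Qc_card) (r2_value_pred0 _ _ Qa').
by rewrite -(agree pred0 Qa'_card Qc'_card) r1_value_order_indep.
Qed.

End Agreement.

End TwoReads.

End Executions.

Section Impossibility.
Variables (S R W : nat) (V : Type) (t : nat) (I : Impl S R W V) (v0 : V).
Hypotheses (t_pos : 0 < t) (I_atomic : atomic_impl t I v0).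
Variables (w1 w2 : 'I_W) (r1 r2 : 'I_R) (v1 v2 : V) (x0 : 'I_S).
Hypotheses (w1_w2 : w1 != w2) (r1_r2 : r1 != r2).
Local Notation Q := (quorum_without t).
Local Notation servers := (concurrent_servers I w1 w2 v1 v2).
Local Notation value1 := (r1_value r1 r2 (Q x0)).
Local Notation value2 := (r2_value r1 r2 (Q x0)).
Implicit Types (B P : pred 'I_S) (Qa Qc : {set 'I_S}).

Lemma concurrent_reads_agree B P Qa Qc : #|Qa| = S - t -> #|Qc| = S - t ->
  value1 (servers B) P Qa Qc = value2 (servers B) P Qa.
Proof.
move=> Qa_card Qc_card; have Q_card := quorum_without_card x0 t_pos.
have [C HC [srv rst idle hist]] := concurrent_writes I v1 v2 w1_w2 Q_card B.
have [C' HC' hist'] := two_reads r1_r2 Q_card P Qa_card Qc_card HC rst (idle r1) (idle r2).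
have := I_atomic HC'; rewrite hist' hist srv; exact: concurrent_writes_reads_agree.
Qed.

Lemma sequential_read_value P Qa Qc : #|Qa| = S - t -> #|Qc| = S - t ->
  value1 (servers pred0) P Qa Qc = v2 /\ value1 (servers predT) P Qa Qc = v1.
Proof.
move=> Qa_card Qc_card; have Q_card := quorum_without_card x0 t_pos.
have w2_w1 : w2 != w1 by rewrite eq_sym.
split.
- have [C HC [srv rst idle hist]] := sequential_writes I v1 v2 Q_card w1_w2.
  have [C' HC' hist'] := two_reads r1_r2 Q_card P Qa_card Qc_card HC rst (idle r1) (idle r2).
  have := I_atomic HC'; rewrite hist' hist srv -concurrent_servers_pred0.
  exact: sequential_writes_read_last.
- have [C HC [srv rst idle hist]] := sequential_writes I v2 v1 Q_card w2_w1.
  have [C' HC' hist'] := two_reads r1_r2 Q_card P Qa_card Qc_card HC rst (idle r1) (idle r2).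
  have := I_atomic HC'; rewrite hist' hist srv -concurrent_servers_predT.
  exact: sequential_writes_read_last.
Qed.

Lemma written_values_eq : v1 = v2.
Proof.
have Q_card (x : 'I_S) := quorum_without_card x t_pos.
pose U B := value1 (servers B) predT (Q x0) (Q x0).
have U_ext B B' : B =1 B' -> U B = U B'.
  by move=> BB'; apply: r1_value_local => s _; exact: concurrent_servers_at.
have U_at B x : U B = value1 (servers B) predT (Q x) (Q x).
  by apply: (r1_value_const t_pos); [exact: concurrent_reads_agree | exact: Q_card ..].
have U_list (l : seq 'I_S) : U [in l] = U pred0.
  elim: l => [|x l IH]; first exact: U_ext.
  rewrite (U_at _ x) (r1_value_local _ _ _ (sg' := servers [in l])) -?U_at //.
  move=> s s_Qx; apply: concurrent_servers_at; rewrite inE.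
  by case: eqP s_Qx => // ->; rewrite (negbTE (quorum_without_notin _ _)).
have [U0 UT] := sequential_read_value predT (Q_card x0) (Q_card x0).
apply: etrans (esym UT) (etrans _ U0); change (U predT = U pred0).
rewrite -(U_list (enum 'I_S)).
by apply: U_ext => s; rewrite mem_enum.
Qed.

End Impossibility.

Theorem theorem1 (S R W t : nat) (V : Type) (v0 : V) :
  1 <= t -> 2 <= W -> 2 <= R -> 2 <= S ->
  (exists v1 v2 : V, [/\ v1 <> v0, v2 <> v0 & v1 <> v2]) ->
  ~ (exists I : Impl S R W V, atomic_impl t I v0).
Proof.
move=> t_pos W2 R2 S2 [v1 [v2 [_ _ v1_v2]]] [I I_atomic]; apply: v1_v2.
have w01 : Ordinal (ltnW W2) != Ordinal W2 by [].
have r01 : Ordinal (ltnW R2) != Ordinal R2 by [].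
exact: (written_values_eq t_pos I_atomic v1 v2 (Ordinal (ltnW S2)) w01 r01).
Qed.
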